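(* Let $h,n\geq 2$ with $h\leq n!$. Then every subgroup of $S_h\times\{id\}$ is an anonymity group with respect to $(h,n)$.
   Context: Permutations compose as $(\sigma\tau)(x)=\sigma(\tau(x))$. Let $G=S_h\times S_n$ and $\mathcal{P}=(S_n)^h$ (preference profiles), with $G$ acting by $(p^{(\varphi,\psi)})_i=\psi\,p_{\varphi^{-1}(i)}$. A social preference function (SPF) is any $F:\mathcal{P}\to S_n$; its symmetry group is $G(F)=\{(\varphi,\psi)\in G: F(p^{(\varphi,\psi)})=\psi F(p)\ \forall p\}$ and its anonymity group is $G_1(F)=G(F)\cap(S_h\times\{id\})$. A subgroup $U\leq S_h\times\{id\}$ is an anonymity group with respect to $(h,n)$ if $U=G_1(F)$ for some SPF $F$. *)

From mathcomp Require Import all_boot all_fingroup.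
Set Implicit Arguments. Unset Strict Implicit. Unset Printing Implicit Defensive.
Local Open Scope group_scope.

(* Preference profiles: h-tuples of linear orders (permutations of 'I_n). *)
Definition profile (h n : nat) := {ffun 'I_h -> 'S_n}.

(* Composition convention of the paper: (s t)(x) = s (t x).
   In mathcomp, (s * t) x = t (s x), so paper's s t is mathcomp's t * s. *)
Definition pcomp (n : nat) (s t : 'S_n) : 'S_n := t * s.

Definition act_profile (h n : nat) (p : profile h n) (phi : 'S_h) (psi : 'S_n)
  : profile h n := [ffun i => pcomp psi (p (phi^-1 i))].

Definition SPF (h n : nat) := profile h n -> 'S_n.

Definition symmetry_group (h n : nat) (F : SPF h n) : {set 'S_h * 'S_n} :=
  [set g : 'S_h * 'S_n |
    [forall p : profile h n, F (act_profile p g.1 g.2) == pcomp g.2 (F p)]].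

Definition anonymity_group (h n : nat) (F : SPF h n) : {set 'S_h * 'S_n} :=
  symmetry_group F :&: [set g : 'S_h * 'S_n | g.2 == 1].

Definition is_anonymity_group (h n : nat) (U : {set 'S_h * 'S_n}) : Prop :=
  exists F : SPF h n, U = anonymity_group F.

From Pilot Require Import Defs.
From mathcomp Require Import all_boot all_fingroup.

(* Fix a profile q in which the h voters hold pairwise distinct orders
   (possible since h <= n!) and a permutation tau <> id (possible since
   n >= 2), and let F be id on the U-orbit of q and tau elsewhere.  F is
   constant on U-orbits, so U <= G_1(F).  Conversely, if (phi, id) is in
   G_1(F), then F(q^phi) = F(q) = id, so q^phi = q^u for some u in U, and
   injectivity of q forces phi = u. *)

Set Implicit Arguments.
Unset Strict Implicit.
Unset Printing Implicit Defensive.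

Local Open Scope group_scope.

Section ProfileAction.

Variables h n : nat.

Lemma pcomp1g (s : 'S_n) : Defs.pcomp 1 s = s.
Proof. exact: mulg1. Qed.

Lemma act_profile1 (p : profile h n) : act_profile p 1 1 = p.
Proof. by apply/ffunP => i; rewrite ffunE invg1 perm1 pcomp1g. Qed.

Lemma act_profileM (p : profile h n) (g k : 'S_h * 'S_n) :
  act_profile p (g * k).1 (g * k).2 =
  act_profile (act_profile p g.1 g.2) k.1 k.2.
Proof. by apply/ffunP => i; rewrite !ffunE /Defs.pcomp invMg permM mulgA. Qed.

Definition profile_action : {action 'S_h * 'S_n &-> profile h n} :=
  @TotalAction _ _ (fun p g => act_profile p g.1 g.2) act_profile1 act_profileM.

Lemma profile_action_anonymous_inj (q : profile h n) (g k : 'S_h * 'S_n) :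
  injective q -> g.2 = 1 -> k.2 = 1 ->
  profile_action q g = profile_action q k -> g = k.
Proof.
case: g k => [phi _] [chi _] q_inj /= -> -> /ffunP eq_q.
congr (_, _); apply: invg_inj; apply/permP => i; apply: q_inj.
by move: (eq_q i); rewrite !ffunE !pcomp1g.
Qed.

Definition orbit_spf (U : {set 'S_h * 'S_n}) (q : profile h n) (tau : 'S_n)
  : SPF h n := fun p => if p \in orbit profile_action U q then 1 else tau.

Lemma anonymity_group_orbit_spf
    (U : {group 'S_h * 'S_n}) (q : profile h n) (tau : 'S_n) :
  U \subset [set g : 'S_h * 'S_n | g.2 == 1] -> injective q -> tau != 1 ->
  anonymity_group (orbit_spf U q tau) = U.
Proof.
move=> /subsetP sub_U q_inj ntau.
have U2 u : u \in U -> u.2 = 1 by move/sub_U; rewrite inE => /eqP.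
apply/setP => g; rewrite !inE; apply/andP/idP => [[/forallP sym_g /eqP g2] | gU].
  have := sym_g q; rewrite [in Defs.pcomp _ _]g2 pcomp1g /orbit_spf orbit_refl.
  case: ifP => [/orbitP [u uU qu] _ | _ /eqP tau1]; last first.
    by rewrite tau1 eqxx in ntau.
  by rewrite -(profile_action_anonymous_inj q_inj (U2 u uU) g2 qu).
split; last by rewrite U2.
apply/forallP => p; rewrite /orbit_spf -[act_profile p _ _]/(profile_action p g).
by rewrite (orbit_transl _ (mem_orbit _ _ gU)) U2 // pcomp1g.
Qed.

End ProfileAction.

Lemma injective_profile_exists h n :
  h <= n`! -> exists q : profile h n, injective q.
Proof.
rewrite -card_Sn => le_h_Sn.
exists [ffun i => enum_val (widen_ord le_h_Sn i)] => i j.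
by rewrite !ffunE => /enum_val_inj [] /val_inj.
Qed.

Lemma nontrivial_perm_exists n : 1 < n -> exists tau : 'S_n, tau != 1.
Proof.
move=> lt1n; exists (tperm (Ordinal (ltnW lt1n)) (Ordinal lt1n)).
by apply/eqP => /(congr1 (@odd_perm _)); rewrite odd_tperm odd_perm1.
Qed.

Theorem mainTheorem4 (h n : nat) (hh : 2 <= h) (hn : 2 <= n) (hle : h <= n`!)
  (U : {group 'S_h * 'S_n}) (hU : U \subset [set g : 'S_h * 'S_n | g.2 == 1%g]) :
  is_anonymity_group U.
Proof.
have [q q_inj] := injective_profile_exists hle.
have [tau ntau] := nontrivial_perm_exists hn.
by exists (orbit_spf U q tau); rewrite anonymity_group_orbit_spf.
Qed.
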